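(* Let $(H,G,\alpha,f)$ and $(H,G,\alpha',f')$ be normalized crossed systems, and write $g\triangleright' h:=\alpha'(g)(h)$. There is a bijection between the set of group homomorphisms $\psi:H\#_\alpha^f G\to H\#_{\alpha'}^{f'}G$ and the set of quadruples $(u,r,v,s)$, where $u:H\to H$, $r:G\to H$, $v:G\to G$ are maps and $s:H\to G$ is a group homomorphism, satisfying for all $g,g_1,g_2\in G$ and $h,h_1,h_2\in H$: (i) $v(g_1)v(g_2)=s(f(g_1,g_2))\,v(g_1g_2)$; (ii) $v(g)s(h)=s(g\triangleright h)\,v(g)$; (iii) $u(h_1h_2)=u(h_1)\big(s(h_1)\triangleright' u(h_2)\big)f'(s(h_1),s(h_2))$; (iv) $u(g\triangleright h)\big(s(g\triangleright h)\triangleright' r(g)\big)f'\big(s(g\triangleright h),v(g)\big)=r(g)\big(v(g)\triangleright' u(h)\big)f'(v(g),s(h))$; (v) $r(g_1)\big(v(g_1)\triangleright' r(g_2)\big)f'(v(g_1),v(g_2))=u(f(g_1,g_2))\big(s(f(g_1,g_2))\triangleright' r(g_1g_2)\big)f'\big(s(f(g_1,g_2)),v(g_1g_2)\big)$. Under this bijection, $\psi$ corresponds to $(u,r,v,s)$ via $$\psi(h,g)=(u(h),s(h))\cdot(r(g),v(g))=\Big(u(h)\big(s(h)\triangleright' r(g)\big)f'(s(h),v(g)),\ s(h)v(g)\Big),$$ and every such quadruple satisfies $u(1)=1$, $v(1)=1$, $r(1)=1$.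
   Context: For groups $H,G$ and a map $\alpha:G\to\mathrm{Aut}(H)$ write $g\triangleright h:=\alpha(g)(h)$. A normalized crossed system is a quadruple $(H,G,\alpha,f)$ with maps $\alpha:G\to\mathrm{Aut}(H)$, $f:G\times G\to H$, $f(1,1)=1$, such that for all $g_1,g_2,g_3\in G$, $h\in H$: (WA) $g_1\triangleright(g_2\triangleright h)=f(g_1,g_2)\big((g_1g_2)\triangleright h\big)f(g_1,g_2)^{-1}$ and (CC) $f(g_1,g_2)f(g_1g_2,g_3)=\big(g_1\triangleright f(g_2,g_3)\big)f(g_1,g_2g_3)$. The crossed product $H\#_\alpha^f G$ is the group on the set $H\times G$ with multiplication $(h_1,g_1)\cdot(h_2,g_2)=\big(h_1(g_1\triangleright h_2)f(g_1,g_2),g_1g_2\big)$ and unit $(1,1)$. *)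

Set Implicit Arguments.

Record group := Group {
  carrier :> Type;
  gmul : carrier -> carrier -> carrier;
  gone : carrier;
  ginv : carrier -> carrier;
  gmulA : forall x y z, gmul x (gmul y z) = gmul (gmul x y) z;
  gmul1g : forall x, gmul gone x = x;
  gmulg1 : forall x, gmul x gone = x;
  gmulVg : forall x, gmul (ginv x) x = gone;
  gmulgV : forall x, gmul x (ginv x) = gone
}.

Arguments gmul {g}.
Arguments gone {g}.
Arguments ginv {g}.

Definition is_hom (A B : group) (f : A -> B) : Prop :=
  forall x y : A, f (gmul x y) = gmul (f x) (f y).

Definition is_aut (H : group) (a : H -> H) : Prop :=
  @is_hom H H a /\ exists b : H -> H, (forall x, b (a x) = x) /\ (forall x, a (b x) = x).

Definition crossed_system {H G : group} (alpha : G -> H -> H) (f : G -> G -> H) : Prop :=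
  (forall g, @is_aut H (alpha g)) /\
  f gone gone = gone /\
  (forall (g1 g2 : G) (h : H),
      alpha g1 (alpha g2 h) = gmul (gmul (f g1 g2) (alpha (gmul g1 g2) h)) (ginv (f g1 g2))) /\
  (forall g1 g2 g3 : G,
      gmul (f g1 g2) (f (gmul g1 g2) g3) = gmul (alpha g1 (f g2 g3)) (f g1 (gmul g2 g3))).

Definition cp_mul {H G : group} (alpha : G -> H -> H) (f : G -> G -> H)
    (x y : H * G) : H * G :=
  let (h1, g1) := x in let (h2, g2) := y in
  (gmul (gmul h1 (alpha g1 h2)) (f g1 g2), gmul g1 g2).

Definition cp_hom {H G : group} (alpha : G -> H -> H) (f : G -> G -> H)
    (alpha' : G -> H -> H) (f' : G -> G -> H) (psi : H * G -> H * G) : Prop :=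
  forall x y, psi (cp_mul alpha f x y) = cp_mul alpha' f' (psi x) (psi y).

Definition admissible {H G : group} (alpha : G -> H -> H) (f : G -> G -> H)
    (alpha' : G -> H -> H) (f' : G -> G -> H)
    (u : H -> H) (r : G -> H) (v : G -> G) (s : H -> G) : Prop :=
  @is_hom H G s /\
  (forall g1 g2 : G, gmul (v g1) (v g2) = gmul (s (f g1 g2)) (v (gmul g1 g2))) /\
  (forall (g : G) (h : H), gmul (v g) (s h) = gmul (s (alpha g h)) (v g)) /\
  (forall h1 h2 : H,
      u (gmul h1 h2) = gmul (gmul (u h1) (alpha' (s h1) (u h2))) (f' (s h1) (s h2))) /\
  (forall (g : G) (h : H),
      gmul (gmul (u (alpha g h)) (alpha' (s (alpha g h)) (r g))) (f' (s (alpha g h)) (v g))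
      = gmul (gmul (r g) (alpha' (v g) (u h))) (f' (v g) (s h))) /\
  (forall g1 g2 : G,
      gmul (gmul (r g1) (alpha' (v g1) (r g2))) (f' (v g1) (v g2))
      = gmul (gmul (u (f g1 g2)) (alpha' (s (f g1 g2)) (r (gmul g1 g2))))
             (f' (s (f g1 g2)) (v (gmul g1 g2)))).

(* the map psi associated to (u,r,v,s):
   psi(h,g) = (u(h), s(h)) . (r(g), v(g)) in H #_alpha'^f' G *)
Definition psi_of {H G : group} (alpha' : G -> H -> H) (f' : G -> G -> H)
    (u : H -> H) (r : G -> H) (v : G -> G) (s : H -> G) (x : H * G) : H * G :=
  let (h, g) := x in
  (gmul (gmul (u h) (alpha' (s h) (r g))) (f' (s h) (v g)), gmul (s h) (v g)).


(* The crossed product H #_alpha^f G is first turned into an honest group: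
   associativity follows from the twisted-module (WA) and cocycle (CC)
   conditions, and (h, g) has the explicit left inverse
   (f(g^-1, g)^-1 (g^-1 |> h)^-1, g^-1).  In this group every element factors
   as (h, g) = (h, 1) (1, g), and the embedded copies of H and G satisfy three
   relations: h |-> (h, 1) is multiplicative, (1, g1)(1, g2) =
   (f(g1, g2), 1)(1, g1 g2) and (1, g)(h, 1) = (g |> h, 1)(1, g).

   This yields a presentation of H #_alpha^f G: homomorphisms into any group K
   correspond bijectively to "compatible pairs" (pH : H -> K, pG : G -> K)
   satisfying the images of those relations, via psi(h, g) = pH h * pG g.
   The corollary is the special case K = H #_alpha'^f' G, in which a pair
   (pH, pG) = (h |-> (u h, s h), g |-> (r g, v g)) is compatible exactly when
   the quadruple (u, r, v, s) satisfies conditions (i)-(v). *)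

Set Implicit Arguments.
Unset Strict Implicit.
Arguments gmulA {g}. Arguments gmul1g {g}. Arguments gmulg1 {g}.
Arguments gmulVg {g}. Arguments gmulgV {g}.
Arguments is_hom {A B}. Arguments is_aut {H}.

Section GroupFacts.
Variable K : group.

Lemma gmul_cancel_l (a x y : K) : gmul a x = gmul a y -> x = y.
Proof.
  intro E. rewrite <- (gmul1g x), <- (gmul1g y), <- (gmulVg a), <- !gmulA, E.
  reflexivity.
Qed.

Lemma idempotent_one (x : K) : gmul x x = x -> x = gone.
Proof. intro E. apply (gmul_cancel_l (a := x)). rewrite gmulg1. exact E. Qed.

Lemma left_neutral_one (x y : K) : gmul x y = y -> x = gone.
Proof.
  intro E. rewrite <- (gmulg1 x), <- (gmulgV y), gmulA, E. reflexivity.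
Qed.

Lemma ginv_one : ginv (gone : K) = gone.
Proof. rewrite <- (gmul1g (ginv gone)). apply gmulgV. Qed.

End GroupFacts.

Lemma hom_one (A B : group) (s : A -> B) : is_hom s -> s gone = gone.
Proof. intro Hs. apply idempotent_one. rewrite <- Hs, gmul1g. reflexivity. Qed.

Lemma aut_injective (K : group) (a : K -> K) :
  is_aut a -> forall x y, a x = a y -> x = y.
Proof. intros [_ [b [Hb _]]] x y E. rewrite <- (Hb x), <- (Hb y), E. reflexivity. Qed.

(* In an associative operation with a left unit, a left inverse map is also a
   right inverse: x x' = x'' x' x x' = x'' x' = e, where x'' is the inverse
   of x'. *)
Lemma left_inverse_is_right_inverse (T : Type) (m : T -> T -> T) (e : T)
    (i : T -> T) :
  (forall x y z, m x (m y z) = m (m x y) z) ->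
  (forall x, m e x = x) -> (forall x, m (i x) x = e) ->
  forall x, m x (i x) = e.
Proof.
  intros mA m1 mV x.
  transitivity (m (m (i (i x)) (i x)) (m x (i x))).
  - rewrite mV, m1. reflexivity.
  - rewrite <- mA, (mA (i x)), mV, m1. apply mV.
Qed.

Section CrossedProduct.
Variables (H G : group) (alpha : G -> H -> H) (f : G -> G -> H).
Hypothesis CS : crossed_system alpha f.

Lemma act_hom g x y : alpha g (gmul x y) = gmul (alpha g x) (alpha g y).
Proof. destruct CS as [A _]. apply (A g). Qed.

Lemma act_one g : alpha g gone = gone.
Proof. destruct CS as [A _]. apply hom_one, A. Qed.

Lemma act_injective g x y : alpha g x = alpha g y -> x = y.
Proof. destruct CS as [A _]. apply aut_injective, A. Qed.

(* Normalization forces the cocycle to be trivial on the unit, and the unit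
   of G to act trivially. *)
Lemma cocycle_one_l g : f gone g = gone.
Proof.
  destruct CS as [_ [F11 [_ CC]]].
  pose proof (CC gone gone g) as E. rewrite !gmul1g, F11, !gmul1g in E.
  apply (act_injective (g := gone)). rewrite act_one.
  symmetry in E. exact (left_neutral_one E).
Qed.

Lemma cocycle_one_r g : f g gone = gone.
Proof.
  destruct CS as [_ [F11 [_ CC]]].
  pose proof (CC g gone gone) as E. rewrite !gmulg1, F11, act_one, gmul1g in E.
  exact (idempotent_one E).
Qed.

Lemma act_unit h : alpha gone h = h.
Proof.
  destruct CS as [_ [F11 [WA _]]].
  pose proof (WA gone gone h) as E.
  rewrite !gmul1g, F11, !gmul1g, ginv_one, gmulg1 in E.
  exact (act_injective E).
Qed.

(* Associativity: the H-components agree by (WA) applied to h3 and by (CC)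
   for the product of the cocycle values. *)
Lemma cp_mulA x y z :
  cp_mul alpha f x (cp_mul alpha f y z) = cp_mul alpha f (cp_mul alpha f x y) z.
Proof.
  destruct CS as [_ [_ [WA CC]]].
  destruct x as [h1 g1], y as [h2 g2], z as [h3 g3]. simpl.
  f_equal; [| apply gmulA].
  rewrite !act_hom, WA, <- !gmulA. do 4 f_equal.
  rewrite <- CC, gmulA, gmulVg, gmul1g. reflexivity.
Qed.

Lemma cp_mul1 x : cp_mul alpha f (gone, gone) x = x.
Proof.
  destruct x as [h g]. simpl. rewrite act_unit, cocycle_one_l, !gmul1g, gmulg1.
  reflexivity.
Qed.

Definition cp_inv (x : H * G) : H * G :=
  let (h, g) := x in
  (gmul (ginv (f (ginv g) g)) (ginv (alpha (ginv g) h)), ginv g).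

Lemma cp_mulV x : cp_mul alpha f (cp_inv x) x = (gone, gone).
Proof.
  destruct x as [h g]. simpl.
  rewrite <- (gmulA (ginv (f (ginv g) g))), !gmulVg, gmulg1, gmulVg.
  reflexivity.
Qed.

Lemma cp_mulg1 x : cp_mul alpha f x (gone, gone) = x.
Proof.
  destruct x as [h g]. simpl. rewrite act_one, cocycle_one_r, !gmulg1.
  reflexivity.
Qed.

Definition crossed_product : group :=
  @Group (H * G)%type (cp_mul alpha f) (gone, gone) cp_inv cp_mulA cp_mul1
    cp_mulg1 cp_mulV
    (left_inverse_is_right_inverse cp_mulA cp_mul1 cp_mulV).

Definition embH (h : H) : crossed_product := (h, gone).
Definition embG (g : G) : crossed_product := (gone, g).

Lemma cp_factor h g : ((h, g) : crossed_product) = gmul (embH h) (embG g).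
Proof.
  simpl. rewrite act_one, cocycle_one_l, !gmulg1, gmul1g. reflexivity.
Qed.

Lemma embH_hom : is_hom embH.
Proof.
  intros h1 h2. destruct CS as [_ [F11 _]].
  simpl. unfold embH. rewrite act_unit, F11, !gmulg1. reflexivity.
Qed.

Lemma embG_mul g1 g2 :
  gmul (embG g1) (embG g2) = gmul (embH (f g1 g2)) (embG (gmul g1 g2)).
Proof. simpl. rewrite !act_one, cocycle_one_l, !gmul1g, !gmulg1. reflexivity. Qed.

Lemma embG_embH g h :
  gmul (embG g) (embH h) = gmul (embH (alpha g h)) (embG g).
Proof.
  simpl. rewrite cocycle_one_r, !act_one, cocycle_one_l, !gmul1g, !gmulg1.
  reflexivity.
Qed.

Definition compatible (K : group) (pH : H -> K) (pG : G -> K) : Prop :=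
  is_hom pH /\
  (forall g1 g2, gmul (pG g1) (pG g2) = gmul (pH (f g1 g2)) (pG (gmul g1 g2))) /\
  (forall g h, gmul (pG g) (pH h) = gmul (pH (alpha g h)) (pG g)).

Definition glue (K : group) (pH : H -> K) (pG : G -> K) (x : H * G) : K :=
  let (h, g) := x in gmul (pH h) (pG g).

Section Presentation.
Variables (K : group) (pH : H -> K) (pG : G -> K).
Hypothesis Hcomp : compatible pH pG.

(* A compatible pair is unital: pH is a homomorphism, and pG 1 is idempotent
   since pG 1 pG 1 = pH (f 1 1) pG 1 = pG 1. *)
Lemma compatible_one : pH gone = gone /\ pG gone = gone.
Proof.
  destruct Hcomp as [HpH [HpG _]]. destruct CS as [_ [F11 _]].
  assert (pH1 : pH gone = gone) by exact (hom_one HpH).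
  split; [exact pH1 |].
  apply idempotent_one. rewrite HpG, gmul1g, F11, pH1, gmul1g. reflexivity.
Qed.

(* Compatible pairs glue to homomorphisms out of the crossed product:
   pH h1 pG g1 pH h2 pG g2 = pH h1 pH(g1|>h2) pG g1 pG g2
                           = pH h1 pH(g1|>h2) pH(f g1 g2) pG(g1 g2). *)
Lemma glue_hom : @is_hom crossed_product K (glue pH pG).
Proof.
  destruct Hcomp as [HpH [HpG HGH]].
  intros [h1 g1] [h2 g2]. simpl.
  rewrite !HpH, <- !gmulA, (gmulA (pG g1)), HGH, <- gmulA, HpG. reflexivity.
Qed.

Lemma glue_embH h : glue pH pG (embH h) = pH h.
Proof. simpl. rewrite (proj2 compatible_one). apply gmulg1. Qed.

Lemma glue_embG g : glue pH pG (embG g) = pG g.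
Proof. simpl. rewrite (proj1 compatible_one). apply gmul1g. Qed.

End Presentation.

Lemma glue_injective (K : group) (pH pH' : H -> K) (pG pG' : G -> K) :
  compatible pH pG -> compatible pH' pG' ->
  (forall x, glue pH pG x = glue pH' pG' x) ->
  (forall h, pH h = pH' h) /\ (forall g, pG g = pG' g).
Proof.
  intros C C' E. split.
  - intro h. rewrite <- (glue_embH C), <- (glue_embH C'). apply E.
  - intro g. rewrite <- (glue_embG C), <- (glue_embG C'). apply E.
Qed.

Section Restriction.
Variables (K : group) (psi : crossed_product -> K).
Hypothesis Hpsi : is_hom psi.

Lemma restrict_compatible :
  compatible (fun h => psi (embH h)) (fun g => psi (embG g)).
Proof.
  split; [| split]; cbn beta.
  - intros h1 h2. rewrite embH_hom. apply Hpsi.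
  - intros g1 g2. rewrite <- !Hpsi. f_equal. apply embG_mul.
  - intros g h. rewrite <- !Hpsi. f_equal. apply embG_embH.
Qed.

Lemma glue_restrict x :
  psi x = glue (fun h => psi (embH h)) (fun g => psi (embG g)) x.
Proof. destruct x as [h g]. simpl glue. rewrite <- Hpsi, <- cp_factor. reflexivity. Qed.

End Restriction.

End CrossedProduct.

Lemma compatible_ext (H G : group) (alpha : G -> H -> H) (f : G -> G -> H)
    (K : group) (pH pH' : H -> K) (pG pG' : G -> K) :
  (forall h, pH h = pH' h) -> (forall g, pG g = pG' g) ->
  compatible alpha f pH pG -> compatible alpha f pH' pG'.
Proof.
  intros EH EG [C1 [C2 C3]]. split; [| split].
  - intros h1 h2. rewrite <- !EH. apply C1.
  - intros g1 g2. rewrite <- !EH, <- !EG. apply C2.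
  - intros g h. rewrite <- !EH, <- !EG. apply C3.
Qed.

Section Quadruples.
Variables (H G : group) (alpha : G -> H -> H) (f : G -> G -> H)
  (alpha' : G -> H -> H) (f' : G -> G -> H).
Hypotheses (CS : crossed_system alpha f) (CS' : crossed_system alpha' f').

Definition quad_H (u : H -> H) (s : H -> G) (h : H) : crossed_product CS' :=
  (u h, s h).
Definition quad_G (r : G -> H) (v : G -> G) (g : G) : crossed_product CS' :=
  (r g, v g).

(* Conditions (i)-(v), together with s being a homomorphism, say precisely
   that (h |-> (u h, s h), g |-> (r g, v g)) is a compatible pair in the
   target crossed product: each relation splits into its H- and G-component. *)
Lemma admissible_compatible u r v s :
  admissible alpha f alpha' f' u r v s <->
  compatible alpha f (quad_H u s) (quad_G r v).
Proof.
  unfold admissible, compatible, is_hom, quad_H, quad_G; simpl.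
  split.
  - intros [Hs [Hi [Hii [Hiii [Hiv Hv]]]]]. split; [| split].
    + intros h1 h2. rewrite Hiii, Hs. reflexivity.
    + intros g1 g2. rewrite Hv, Hi. reflexivity.
    + intros g h. rewrite Hiv, Hii. reflexivity.
  - intros [C1 [C2 C3]].
    repeat split; intros x y.
    + exact (f_equal snd (C1 x y)).
    + exact (f_equal snd (C2 x y)).
    + exact (f_equal snd (C3 x y)).
    + exact (f_equal fst (C1 x y)).
    + symmetry. exact (f_equal fst (C3 x y)).
    + exact (f_equal fst (C2 x y)).
Qed.

Lemma psi_of_glue u r v s :
  psi_of alpha' f' u r v s = glue (quad_H u s) (quad_G r v).
Proof. reflexivity. Qed.

Lemma cp_hom_is_hom (psi : H * G -> H * G) :
  cp_hom alpha f alpha' f' psi <->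
  @is_hom (crossed_product CS) (crossed_product CS') psi.
Proof. apply iff_refl. Qed.

Lemma admissible_hom u r v s :
  admissible alpha f alpha' f' u r v s ->
  cp_hom alpha f alpha' f' (psi_of alpha' f' u r v s).
Proof.
  intro Ad. apply cp_hom_is_hom. rewrite psi_of_glue.
  apply glue_hom, admissible_compatible, Ad.
Qed.

Lemma hom_admissible (psi : H * G -> H * G) :
  cp_hom alpha f alpha' f' psi ->
  admissible alpha f alpha' f'
    (fun h => fst (psi (embH CS h))) (fun g => fst (psi (embG CS g)))
    (fun g => snd (psi (embG CS g))) (fun h => snd (psi (embH CS h))) /\
  (forall x, psi x = psi_of alpha' f'
    (fun h => fst (psi (embH CS h))) (fun g => fst (psi (embG CS g)))
    (fun g => snd (psi (embG CS g))) (fun h => snd (psi (embH CS h))) x).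
Proof.
  intro Hpsi. apply (proj1 (cp_hom_is_hom psi)) in Hpsi. split.
  - apply admissible_compatible, (compatible_ext (K := crossed_product CS')
        (pH := fun h => psi (embH CS h)) (pG := fun g => psi (embG CS g))).
    + intro. apply surjective_pairing.
    + intro. apply surjective_pairing.
    + exact (restrict_compatible Hpsi).
  - intros [h g]. rewrite (glue_restrict Hpsi). simpl.
    destruct (psi (embH CS h)), (psi (embG CS g)). reflexivity.
Qed.

Lemma admissible_injective u r v s u0 r0 v0 s0 :
  admissible alpha f alpha' f' u r v s ->
  admissible alpha f alpha' f' u0 r0 v0 s0 ->
  (forall x, psi_of alpha' f' u r v s x = psi_of alpha' f' u0 r0 v0 s0 x) ->
  (forall h, u h = u0 h) /\ (forall g, r g = r0 g) /\
  (forall g, v g = v0 g) /\ (forall h, s h = s0 h).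
Proof.
  intros Ad Ad0 E. rewrite !psi_of_glue in E.
  apply admissible_compatible in Ad, Ad0.
  destruct (glue_injective CS Ad Ad0 E) as [EH EG].
  repeat split; intro x;
    solve [exact (f_equal fst (EH x)) | exact (f_equal snd (EH x))
          | exact (f_equal fst (EG x)) | exact (f_equal snd (EG x))].
Qed.

Lemma admissible_normalized u r v s :
  admissible alpha f alpha' f' u r v s ->
  u gone = gone /\ v gone = gone /\ r gone = gone.
Proof.
  intro Ad. apply admissible_compatible in Ad.
  destruct (compatible_one CS Ad) as [EH EG].
  repeat split; [exact (f_equal fst EH) | exact (f_equal snd EG)
                | exact (f_equal fst EG)].
Qed.

End Quadruples.

Theorem corollary2p3 (H G : group) (alpha : G -> H -> H) (f : G -> G -> H)
    (alpha' : G -> H -> H) (f' : G -> G -> H) :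
  crossed_system alpha f -> crossed_system alpha' f' ->
  (* well-defined: every admissible quadruple gives a homomorphism *)
  (forall u r v s, admissible alpha f alpha' f' u r v s ->
     cp_hom alpha f alpha' f' (psi_of alpha' f' u r v s)) /\
  (* surjective: every homomorphism arises this way *)
  (forall psi : H * G -> H * G, cp_hom alpha f alpha' f' psi ->
     exists u r v s, admissible alpha f alpha' f' u r v s /\
       forall x, psi x = psi_of alpha' f' u r v s x) /\
  (* injective *)
  (forall u r v s u0 r0 v0 s0,
     admissible alpha f alpha' f' u r v s ->
     admissible alpha f alpha' f' u0 r0 v0 s0 ->
     (forall x, psi_of alpha' f' u r v s x = psi_of alpha' f' u0 r0 v0 s0 x) ->
     (forall h, u h = u0 h) /\ (forall g, r g = r0 g) /\
     (forall g, v g = v0 g) /\ (forall h, s h = s0 h)) /\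
  (* normalization of admissible quadruples *)
  (forall u r v s, admissible alpha f alpha' f' u r v s ->
     u gone = gone /\ v gone = gone /\ r gone = gone).
Proof.
  intros CS CS'. split; [| split; [| split]].
  - exact (admissible_hom CS CS').
  - intros psi Hpsi. do 4 eexists. exact (hom_admissible CS CS' Hpsi).
  - exact (admissible_injective CS CS').
  - exact (admissible_normalized CS CS').
Qed.
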